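(* Let $P$ be a finite metabelian $p$-group of rank $r$, and let $t\ge1$. Assume that every abelian-by-cyclic subgroup of $P$ has an abelian subgroup of index at most $t$. Then $P$ has an abelian normal subgroup of index at most $t^{2r}$.
   Context: The rank of a finite group is the minimal $r$ such that every subgroup is $r$-generated. A group is metabelian if its commutator subgroup is abelian, and abelian-by-cyclic if it has an abelian normal subgroup with cyclic quotient. *)

From mathcomp Require Import all_boot all_fingroup all_solvable.
Set Implicit Arguments. Unset Strict Implicit. Unset Printing Implicit Defensive.
Local Open Scope group_scope.

Definition r_generated (gT : finGroupType) (H : {set gT}) (r : nat) : Prop :=
  exists X : {set gT}, #|X| <= r /\ <<X>> = H.

Definition has_rank (gT : finGroupType) (G : {set gT}) (r : nat) : Prop :=
  (forall H : {group gT}, H \subset G -> r_generated H r) /\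
  (forall r' : nat, (forall H : {group gT}, H \subset G -> r_generated H r') -> r <= r').

Definition metabelian (gT : finGroupType) (G : {set gT}) : Prop :=
  abelian (G^`(1)).

Definition abelian_by_cyclic (gT : finGroupType) (G : {set gT}) : Prop :=
  exists A : {group gT}, [/\ A <| G, abelian A & cyclic (G / A)].

From mathcomp Require Import all_boot all_fingroup all_solvable.
Set Implicit Arguments. Unset Strict Implicit. Unset Printing Implicit Defensive.
Local Open Scope group_scope.

(* Let A be maximal among the abelian normal subgroups of P containing P'.
   Then A is self-centralising and P/A is abelian, generated by the images of
   at most r generators of P, so it suffices that every x in P has order at
   most t modulo A.  Now H = A<x> is abelian-by-cyclic, hence has an abelian
   subgroup B with |H : B| <= t.  B/(A ∩ B) is cyclic, generated by some bA,
   and b^|A : C_A(b)| centralises A: the <b>-orbit of any a in A lies in the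
   coset a[A, b], and all the indices involved are powers of p.  Hence
   |B : A ∩ B| <= |A : A ∩ B|, i.e. |H : A| <= |H : B| <= t, and
   |P : A| <= t^r. *)

Lemma pnat_leq_dvdn p m n : prime p -> p.-nat m -> p.-nat n -> m <= n -> m %| n.
Proof.
move=> p_pr pm pn le_mn; rewrite -(part_pnat_id pm) -(part_pnat_id pn) !p_part.
apply: dvdn_exp2l; rewrite -(@leq_exp2l p) ?prime_gt1 //.
by rewrite -!p_part !part_pnat_id.
Qed.

Section AbelianBySelfCentralising.

Variable gT : finGroupType.
Implicit Types (A B H K P : {group gT}) (a b x : gT).

Lemma expg_indexg_normal K H x : K <| H -> x \in H -> x ^+ #|H : K| \in K.
Proof.
move=> nsKH Hx; have nKx := subsetP (normal_norm nsKH) x Hx.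
apply: coset_idr; first by rewrite groupX.
by rewrite morphX // -card_quotient ?normal_norm // expg_cardG ?mem_quotient.
Qed.

Lemma commg_morphM A b : abelian A -> b \in 'N(A) ->
  {in A &, {morph (fun a => [~ a, b]) : x y / x * y}}.
Proof.
move=> cAA nAb x y Ax Ay /=; rewrite commMgJ.
have Axb : [~ x, b] \in A by rewrite groupM ?groupV // memJ_norm.
by have /commgP/conjg_fixP -> := centsP cAA _ Axb y Ay.
Qed.

(* The <b>-orbit of a lies in a * f(A), where f is the morphism c |-> [c, b]. *)
Lemma index_cent1_cycle_leq A a b : abelian A -> b \in 'N(A) -> a \in A ->
  #|<[b]> : 'C_<[b]>[a]| <= #|A : 'C_A[b]|.
Proof.
move=> cAA nAb Aa; pose f := Morphism (commg_morphM cAA nAb).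
have cent_ker : 'C_A[b] \subset 'ker f.
  apply/subsetP=> c /setIP[Ac /cent1P cbc]; apply/kerP => //=.
  exact/eqP/commgP.
have fA_conj c : c \in f @* A -> c ^ b \in f @* A.
  case/morphimP=> d _ Ad -> /=; rewrite conjRg [b ^ b]conjgE mulKg.
  by apply: (mem_morphim f); rewrite memJ_norm.
have fA_comm k : [~ a, b ^+ k] \in f @* A.
  elim: k => [|k IHk]; first by rewrite commg1 group1.
  by rewrite expgSr commgMJ groupM ?fA_conj // (mem_morphim f Aa).
apply: (@leq_trans #|a *: f @* A|).
  rewrite index_cent1; apply: subset_leq_card.
  apply/subsetP=> _ /imsetP[_ /cycleP[k ->] ->].
  by rewrite mem_lcoset; apply: fA_comm.
rewrite card_lcoset card_morphim setIid.
exact: dvdn_leq (indexg_gt0 _ _) (indexgS _ cent_ker).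
Qed.

Lemma card_abelian_gen_leq (Y : {set gT}) t :
  abelian <<Y>> -> {in Y, forall y, #[y] <= t} -> #|<<Y>>| <= t ^ #|Y|.
Proof.
move cardY: #|Y| => n; elim: n Y cardY => [|n IHn] Y cardY cYY leYt.
  by move/eqP: cardY; rewrite cards_eq0 => /eqP ->; rewrite gen0 cards1.
have [y Yy] : exists y, y \in Y by apply/set0Pn; rewrite -card_gt0 cardY.
have sY'Y : <<Y :\ y>> \subset <<Y>> by rewrite genS ?subsetDl.
have sYy : <[y]> \subset <<Y>> by rewrite cycle_subG mem_gen.
have defY : <<Y>> = <[y]> * <<Y :\ y>>.
  rewrite -comm_joingE; last exact/centC/(sub_abelian_cent2 cYY).
  by rewrite joing_idr /cycle joing_idl joingE setD1K.
rewrite defY expnS; apply: (@leq_trans (#|<[y]>| * #|<<Y :\ y>>|)).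
  by rewrite mul_cardG leq_pmulr ?cardG_gt0.
apply: leq_mul; first by rewrite -orderE leYt.
apply: IHn; first by rewrite (cardsD1 y) Yy in cardY; case: cardY.
  exact: abelianS cYY.
by move=> z /setD1P[_ /leYt].
Qed.

Variable p : nat.
Hypothesis p_pr : prime p.

Lemma expg_index_cent1_cent H A b : p.-group H -> A \subset H -> abelian A ->
  b \in H -> b \in 'N(A) -> b ^+ #|A : 'C_A[b]| \in 'C(A).
Proof.
move=> pH sAH cAA Hb nAb; apply/centP=> a Aa; set K := <[b]>.
have pK : p.-group K by rewrite (pgroupS _ pH) ?cycle_subG.
have dvd_index : #|K : 'C_K[a]| %| #|A : 'C_A[b]|.
  apply: pnat_leq_dvdn p_pr _ _ (index_cent1_cycle_leq cAA nAb Aa).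
    exact: pnat_dvd (dvdn_indexg _ _) pK.
  exact: pnat_dvd (dvdn_indexg _ _) (pgroupS sAH pH).
have nsCK : 'C_K[a] <| K.
  by rewrite -sub_abelian_normal ?cycle_abelian ?subsetIl.
have := expg_indexg_normal nsCK (cycle_id b).
move/(groupX (#|A : 'C_A[b]| %/ #|K : 'C_K[a]|)).
by rewrite -expgM mulnC divnK // => /subcent1P[_ /commute_sym].
Qed.

Lemma index_abelian_cyclic_quotient_leq H A B :
    p.-group H -> A <| H -> abelian A -> 'C_H(A) \subset A ->
    B \subset H -> abelian B -> cyclic (B / A) ->
  #|B : A :&: B| <= #|A : A :&: B|.
Proof.
move=> pH nsAH cAA sCHA sBH cBB /cyclicP[g defBA].
have nAB : B \subset 'N(A) := subset_trans sBH (normal_norm nsAH).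
have /morphimP[b nAb Bb defg] : g \in B / A by rewrite defBA cycle_id.
have cent_b : A :&: B \subset 'C_A[b].
  by apply/subsetP=> c /setIP[Ac Bc]; rewrite inE Ac; apply/cent1P/(centsP cBB).
rewrite {1}setIC indexgI -card_quotient // defBA defg -orderE.
apply: leq_trans _ (dvdn_leq (indexg_gt0 _ _) (indexgS _ cent_b)).
apply: dvdn_leq (indexg_gt0 _ _) _; rewrite order_dvdn -morphX //.
apply/eqP/coset_id/(subsetP sCHA); rewrite inE groupX ?(subsetP sBH) //=.
exact: expg_index_cent1_cent pH (normal_sub nsAH) cAA (subsetP sBH b Bb) nAb.
Qed.

Lemma index_selfcent_abelian_leq H A B :
    p.-group H -> A <| H -> abelian A -> 'C_H(A) \subset A -> cyclic (H / A) ->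
    B \subset H -> abelian B ->
  #|H : A| <= #|H : B|.
Proof.
move=> pH nsAH cAA sCHA cycHA sBH cBB.
have cycBA : cyclic (B / A) by rewrite (cyclicS (quotientS _ sBH)).
have le_BA := index_abelian_cyclic_quotient_leq pH nsAH cAA sCHA sBH cBB cycBA.
rewrite -(@leq_pmul2r #|A : A :&: B|) ?indexg_gt0 //.
rewrite !Lagrange_index ?subsetIl ?subsetIr ?normal_sub //.
by rewrite -(Lagrange_index sBH (subsetIr A B)) leq_mul.
Qed.

Lemma order_coset_selfcent_leq P A t x :
    p.-group P -> A <| P -> abelian A -> 'C_P(A) \subset A ->
    (forall H : {group gT}, H \subset P -> abelian_by_cyclic H ->
       exists B : {group gT}, [/\ B \subset H, abelian B & #|H : B| <= t]) ->
    x \in P ->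
  #[coset A x] <= t.
Proof.
move=> pP nsAP cAA sCPA abc_t Px.
have nAx : <[x]> \subset 'N(A).
  by rewrite cycle_subG (subsetP (normal_norm nsAP)).
have sHP : A <*> <[x]> \subset P by rewrite join_subG normal_sub // cycle_subG.
have nsAH : A <| A <*> <[x]> := normalS (joing_subl _ _) sHP nsAP.
have cycHA : cyclic (A <*> <[x]> / A).
  by rewrite quotientYidl // quotient_cyclic ?cycle_cyclic.
have [B [sBH cBB le_HB_t]] := abc_t _ sHP (ex_intro _ A (And3 nsAH cAA cycHA)).
rewrite orderE -quotient_cycle -?cycle_subG // -quotientYidl //.
rewrite card_quotient ?normal_norm // (leq_trans _ le_HB_t) //.
apply: index_selfcent_abelian_leq (pgroupS sHP pP) _ _ _ _ sBH cBB => //.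
exact: subset_trans (setSI _ sHP) sCPA.
Qed.

End AbelianBySelfCentralising.

Theorem lemma3p17 (gT : finGroupType) (p : nat) (P : {group gT}) (r t : nat) :
  prime p -> p.-group P -> metabelian P -> has_rank P r -> 1 <= t ->
  (forall H : {group gT}, H \subset P -> abelian_by_cyclic H ->
     exists B : {group gT}, [/\ B \subset H, abelian B & #|H : B| <= t]) ->
  exists A : {group gT}, [/\ A <| P, abelian A & #|P : A| <= t ^ (2 * r)].
Proof.
move=> p_pr pP metaP [P_rgen _] t_gt0 abc_t.
pose ab_normal (A : {group gT}) := (A <| P) && abelian A.
have ab_normal_P' : ab_normal P^`(1)%G.
  by rewrite /ab_normal der_normal; apply: metaP.
have [A maxA sP'A] := maxgroup_exists ab_normal_P'.
have /SCN_P[nsAP defCA] := max_SCN pP maxA.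
have /andP[_ cAA] := maxgroupp maxA.
have sCPA : 'C_P(A) \subset A by rewrite defCA.
exists A; split=> //.
have [X [leXr defP]] := P_rgen P (subxx _).
have sXP : X \subset P by rewrite -defP subset_gen.
have nAX : X \subset 'N(A) := subset_trans sXP (normal_norm nsAP).
rewrite -card_quotient ?normal_norm // -defP quotient_gen //.
apply: leq_trans (card_abelian_gen_leq (t := t) _ _) _.
- by rewrite -quotient_gen // defP sub_der1_abelian.
- move=> _ /morphimP[x _ Xx ->].
  have Px : x \in P := subsetP sXP x Xx.
  by have := order_coset_selfcent_leq p_pr pP nsAP cAA sCPA abc_t Px.
- rewrite leq_pexp2l // (leq_trans (leq_quotient _ _)) // (leq_trans leXr) //.
  by rewrite leq_pmull.
Qed.
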